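(* For every dimension $d$ and integers $t\ge 2$, $k\ge 1$, $h\ge 1$ there exists an integer $m=m(t,k,h)$ (depending only on $t,k,h$) with the following property: for every finite family $\mathcal{H}$ of $h$ halfspaces in $\mathbb{R}^d$, the (unordered) $t$-tuples of every finite set of points $S\subset\mathbb{R}^d$ can be $k$-colored such that every $\mathcal{H}$-region that contains at least $m$ points of $S$ contains a $t$-tuple of points of $S$ of each of the $k$ colors.
   Context: Given a finite family of halfspaces $\mathcal{H}=\{H_1,\dots,H_h\}$ in $\mathbb{R}^d$, a region $R$ is an $\mathcal{H}$-region if it is the intersection of finitely many halfspaces, each of which is a translate of one of the halfspaces in $\mathcal{H}$. A $t$-tuple of points of $S$ is a $t$-element subset of $S$; a region contains a $t$-tuple if it contains all its points. *)

From HB Require Import structures.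
From mathcomp Require Import all_boot all_order all_algebra.
From mathcomp Require Import finmap.
From mathcomp Require Import reals.
Set Implicit Arguments. Unset Strict Implicit. Unset Printing Implicit Defensive.
Import Order.TTheory GRing.Theory Num.Theory.
Local Open Scope ring_scope.
Local Open Scope fset_scope.

Definition dotp (R : realType) (d : nat) (a x : 'rV[R]_d) : R :=
  \sum_(i < d) a ord0 i * x ord0 i.

Record halfspace (R : realType) (d : nat) := Halfspace {
  hs_normal : 'rV[R]_d;
  hs_offset : R;
  hs_open : bool;
  hs_normal_neq0 : hs_normal != 0 }.

Definition in_halfspace (R : realType) (d : nat) (H : halfspace R d) (x : 'rV[R]_d) : bool :=
  if hs_open H then dotp (hs_normal H) x < hs_offset H
  else dotp (hs_normal H) x <= hs_offset H.

Definition in_translate (R : realType) (d : nat) (H : halfspace R d) (v x : 'rV[R]_d) : bool :=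
  in_halfspace H (x - v).

(* An H-region for the family Hs : 'I_h -> halfspace, described by a finite list of
   (index, translation vector) pairs: the intersection of the translates
   Hs i + v over the list. *)
Definition in_region (R : realType) (d h : nat) (Hs : 'I_h -> halfspace R d)
  (r : seq ('I_h * 'rV[R]_d)) (x : 'rV[R]_d) : bool :=
  all (fun p => in_translate (Hs p.1) p.2 x) r.

Definition is_tuple_of (R : realType) (d t : nat) (S T : {fset 'rV[R]_d}) : bool :=
  (T `<=` S) && (#|` T| == t)%N.

From HB Require Import structures.
From mathcomp Require Import all_boot all_order all_algebra.
From mathcomp Require Import finmap.
From mathcomp Require Import reals.
From mathcomp Require Import zify.
Import Order.TTheory GRing.Theory Num.Theory.
Set Implicit Arguments. Unset Strict Implicit. Unset Printing Implicit Defensive.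
Local Open Scope fset_scope.

(* Order S along each of the h normal directions.  A region is "down-closed": it
   contains every point of S that, in each direction, lies below some point of
   the region.  Write [down A] for the down-closure of a t-tuple A, and colour A
   by the height, modulo k, of [down A] in the inclusion order of all such
   closures.  In a region with m points, the Erdos-Szekeres argument iterated over
   the h directions yields t + k points forming a sequence that is monotone in
   every direction and increasing in the first.  Keeping its first t - 1 points
   and letting the last point climb the sequence gives k strictly increasing
   closures inside the region, so one of them has height at least k, and the
   closures below it realise every height 1, ..., k, that is, every colour. *)

Lemma rev_pairwise (T : Type) (r : rel T) (s : seq T) :
  pairwise r (rev s) = pairwise (fun x y => r y x) s.
Proof.
by elim: s => //= x s IH; rewrite rev_cons pairwise_rcons IH all_rev.
Qed.

Section Monotone.
Variables (T : eqType) (r : rel T).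

Definition monotone (s : seq T) : bool :=
  pairwise r s || pairwise (fun x y => r y x) s.

Lemma monotone_rev s : monotone (rev s) = monotone s.
Proof. by rewrite /monotone !rev_pairwise orbC. Qed.

Lemma subseq_monotone s1 s2 : subseq s1 s2 -> monotone s2 -> monotone s1.
Proof. by rewrite /monotone => ss /orP[] /(subseq_pairwise ss) ->; rewrite ?orbT. Qed.

Hypothesis r_total : total r.

Lemma erdos_szekeres p q s : (2 ^ (p + q) <= size s)%N ->
  exists2 s', subseq s' s &
    ((p <= size s') && pairwise r s') || ((q <= size s') && pairwise (fun x y => r y x) s').
Proof.
elim: p q s => [|p IHp] q s hs; first by exists [::]; rewrite ?sub0seq.
elim: q s hs => [|q IHq] s hs; first by exists [::]; rewrite ?sub0seq ?orbT.
case: s hs => [|x s] hs; first by move: hs; rewrite /= leqn0 expn_eq0.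
have cons_sub P s' : subseq s' (filter P s) -> subseq (x :: s') (x :: s).
  by move=> ss'; rewrite /= eqxx (subseq_trans ss' (filter_subseq _ _)).
have drop_sub P s' : subseq s' (filter P s) -> subseq s' (x :: s).
  by move=> ss'; rewrite (subseq_trans ss') ?(subseq_trans (filter_subseq _ _)) ?subseq_cons.
have [above|below] : (2 ^ (p + q.+1) <= size (filter (r x) s))%N \/
                     (2 ^ (p.+1 + q) <= size (filter (predC (r x)) s))%N.
  rewrite addSnnS; move: hs; rewrite addSn expnS /= !size_filter.
  by rewrite -(count_predC (r x) s); lia.
- have [s' ss' /orP[/andP[ps' rs']|qs']] := IHp _ _ above.
    exists (x :: s'); first exact: cons_sub ss'.
    apply/orP; left; rewrite /= ltnS ps' rs' andbT; apply/allP => y /(mem_subseq ss').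
    by rewrite mem_filter => /andP[].
  by exists s'; [exact: drop_sub ss' | rewrite qs' orbT].
- have [s' ss' /orP[ps'|/andP[qs' rs']]] := IHq _ below.
    by exists s'; [exact: drop_sub ss' | rewrite ps'].
  exists (x :: s'); first exact: cons_sub ss'.
  apply/orP; right; rewrite /= ltnS qs' rs' andbT; apply/allP => y /(mem_subseq ss').
  by rewrite mem_filter => /andP[/= /negPf rxy _]; move: (r_total x y); rewrite rxy.
Qed.

Lemma monotone_subseq n s : (2 ^ (n + n) <= size s)%N ->
  exists2 s', subseq s' s & (n <= size s')%N && monotone s'.
Proof.
case/erdos_szekeres=> s' ss' long; exists s' => //.
by rewrite /monotone; case/orP: long => /andP[-> ->]; rewrite ?orbT.
Qed.

End Monotone.

Definition monotone_bound (h n : nat) : nat := iter h (fun M => 2 ^ (M + M)) n.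

Lemma monotone_subseq_all (T : eqType) (I : Type) (r : I -> rel T) :
  (forall i, total (r i)) -> forall (J : seq I) n s,
  (monotone_bound (size J) n <= size s)%N ->
  exists2 s', subseq s' s & (n <= size s')%N && all (fun i => monotone (r i) s') J.
Proof.
move=> r_total; elim=> [|i J IH] n s hs; first by exists s; rewrite ?subseq_refl ?andbT.
have [s1 ss1 /andP[long1 mono1]] := monotone_subseq (r_total i) (hs : 2 ^ _ <= _)%N.
have [s2 ss2 /andP[long2 mono2]] := IH n s1 long1.
exists s2; first exact: subseq_trans ss2 ss1.
by rewrite long2 /= mono2 (subseq_monotone ss2 mono1).
Qed.

Lemma split_ends (T : Type) n (a : seq T) : (n.+2 <= size a)%N ->
  exists x p b y, [/\ a = x :: p ++ rcons b y, size p = n & size a = (n + size b).+2].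
Proof.
case: a => [|x a] //= ha; have := cat_take_drop n a.
have take_n : size (take n a) = n by rewrite size_takel //; lia.
case/lastP E: (drop n a) => [|b y] def_a.
  by move/(congr1 size): E; rewrite size_drop /=; lia.
exists x, (take n a), b, y; split=> //; first by rewrite def_a.
by rewrite -{1}def_a size_cat size_rcons take_n addnS.
Qed.

Lemma subseq_ends (T : eqType) x (p b : seq T) y :
  subseq (x :: rcons p y) (x :: p ++ rcons b y).
Proof. by rewrite /= eqxx -cats1 cat_subseq // sub1seq mem_rcons mem_head. Qed.

Section Height.
Variables (T : choiceType) (F : seq {fset T}).

Fixpoint height_rec (n : nat) (Y : {fset T}) : nat :=
  if n is n'.+1 then (\max_(Z <- F | Z `<` Y) height_rec n' Z).+1 else 0.

(* Proper subsets are smaller, so [#|Y|.+1] unfoldings suffice. *)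
Definition height (Y : {fset T}) : nat := height_rec #|` Y|.+1 Y.

Lemma height_rec_fuel n m Y :
  (#|` Y| < n)%N -> (#|` Y| < m)%N -> height_rec n Y = height_rec m Y.
Proof.
elim: n m Y => [|n IH] [|m] Y //= Yn Ym; congr _.+1; apply: eq_bigr => Z ZY.
by apply: IH; apply: leq_trans (fproper_ltn_card ZY) _; rewrite -ltnS.
Qed.

Lemma heightE Y : height Y = (\max_(Z <- F | Z `<` Y) height Z).+1.
Proof.
rewrite {1}/height [LHS]/=; congr _.+1; apply: eq_bigr => Z ZY.
by apply: height_rec_fuel => //; apply: leq_trans (fproper_ltn_card ZY) _.
Qed.

Lemma height_gt0 Y : (0 < height Y)%N.
Proof. by rewrite heightE. Qed.

Lemma height_lt Z Y : Z \in F -> Z `<` Y -> (height Z < height Y)%N.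
Proof. by move=> ZF ZY; rewrite (heightE Y) ltnS; apply: leq_bigmax_seq. Qed.

Lemma height_pred Y : (1 < height Y)%N ->
  exists2 Z, Z \in F & (Z `<` Y) && (height Z == (height Y).-1).
Proof.
rewrite heightE ltnS /=; set M := \max_(Z <- F | Z `<` Y) height Z => M_gt0.
apply/hasP; apply/negPn/negP => /hasPn noZ.
suff : (M <= M.-1)%N by lia.
apply/bigmax_leqP_seq => Z ZF ZY; have := noZ Z ZF; rewrite ZY /= => ZM.
have : (height Z <= M)%N by exact: leq_bigmax_seq.
by rewrite leq_eqVlt (negPf ZM); lia.
Qed.

Lemma height_descent Y c : Y \in F -> (0 < c <= height Y)%N ->
  exists2 Z, Z \in F & (Z `<=` Y) && (height Z == c).
Proof.
move=> YF /andP[c_gt0 cY]; move Hn: (height Y - c)%N => n.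
elim: n Y Hn YF cY => [|n IH] Y Hn YF cY.
  by exists Y => //; rewrite fsubset_refl eqn_leq cY -subn_eq0 Hn.
have /height_pred[Z ZF /andP[ZY /eqP hZ]] : (1 < height Y)%N by lia.
have [Z' Z'F /andP[Z'Z Z'c]] : exists2 Z', Z' \in F & (Z' `<=` Z) && (height Z' == c).
  by apply: IH; rewrite ?hZ //; lia.
by exists Z' => //; rewrite Z'c (fsubset_trans Z'Z (fproper_sub ZY)).
Qed.

End Height.

Section DownClosure.
Variables (T : choiceType) (I : finType) (le : I -> rel T) (S : {fset T}).
Hypothesis total_le : forall i, total (le i).
Hypothesis trans_le : forall i, transitive (le i).
Hypothesis anti_le : forall i, {in S &, antisymmetric (le i)}.

Definition down (A : {fset T}) : {fset T} := [fset z in S | [forall i, has (le i z) A]].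

Lemma downP A z :
  reflect (z \in S /\ forall i, exists2 x, x \in A & le i z x) (z \in down A).
Proof.
rewrite inE; apply: (iffP andP) => -[zS zA]; split=> //.
  by move=> i; apply/hasP; move/forallP: zA.
by apply/forallP => i; apply/hasP; exact: zA.
Qed.

Lemma sub_down A : A `<=` S -> A `<=` down A.
Proof.
move=> /fsubsetP AS; apply/fsubsetP => x xA; apply/downP; split; first exact: AS.
by move=> i; exists x => //; rewrite -[le i x x]orbb total_le.
Qed.

Lemma down_subset A B : A `<=` down B -> down A `<=` down B.
Proof.
move=> /fsubsetP AB; apply/fsubsetP => z /downP[zS zA]; apply/downP; split=> // i.
have [x /AB/downP[_ /(_ i)[y yB xy]] zx] := zA i.
by exists y => //; exact: trans_le zx xy.
Qed.

Lemma notin_down i A y : A `<=` S -> y \in S -> y \notin A ->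
  {in A, forall x, le i x y} -> y \notin down A.
Proof.
move=> /fsubsetP AS yS yA below; apply/downP => -[_ /(_ i)[x xA yx]].
suff xy : x = y by move: yA; rewrite -xy xA.
by apply: (@anti_le i _ _ (AS _ xA) yS); rewrite below.
Qed.

Lemma monotone_sub_down x s y B : x \in B -> y \in B ->
  {subset x :: rcons s y <= S} -> (forall i, monotone (le i) (x :: rcons s y)) ->
  {subset x :: rcons s y <= down B}.
Proof.
move=> xB yB aS mono z za; apply/downP; split=> [|i]; first exact: aS.
have le_refl w : le i w w by rewrite -[le i w w]orbb total_le.
case/orP: (mono i) => [up|dn].
  exists y => //; move: za up; rewrite -rcons_cons mem_rcons in_cons pairwise_rcons.
  by case/predU1P => [->|zs /andP[/allP/(_ z zs)]].
exists x => //; move: za dn; rewrite in_cons pairwise_cons.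
by case/predU1P => [->|zs /andP[/allP/(_ z zs)]].
Qed.

Variable i0 : I.

Definition monotone_chain (a : seq T) : Prop :=
  [/\ uniq a, {subset a <= S}, pairwise (le i0) a & forall i, monotone (le i) a].

Lemma subseq_monotone_chain a1 a2 : subseq a1 a2 -> monotone_chain a2 -> monotone_chain a1.
Proof.
move=> ss [u aS up mono]; split; first exact: subseq_uniq u.
- by move=> x /(mem_subseq ss)/aS.
- exact: subseq_pairwise up.
- by move=> i; exact: subseq_monotone (mono i).
Qed.

Lemma monotone_chain_or_rev a : uniq a -> {subset a <= S} ->
  (forall i, monotone (le i) a) -> monotone_chain a \/ monotone_chain (rev a).
Proof.
move=> u aS mono; case/orP: (mono i0) => [up|dn]; [left|right]; split=> //.
- by rewrite rev_uniq.
- by move=> x; rewrite mem_rev; exact: aS.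
- by rewrite rev_pairwise.
- by move=> i; rewrite monotone_rev.
Qed.

Lemma monotone_chain_in X n : X `<=` S -> (monotone_bound #|I| n <= #|` X|)%N ->
  exists a, [/\ monotone_chain a, (n <= size a)%N & {subset a <= X}].
Proof.
rewrite cardE => XS large.
have [a aX /andP[long /allP mono]] := monotone_subseq_all total_le large.
have a_X : {subset a <= X} by move=> z /(mem_subseq aX).
have a_S : {subset a <= S} by move=> z /a_X/(fsubsetP XS).
have mono_a i : monotone (le i) a by apply: mono; rewrite mem_enum.
case: (monotone_chain_or_rev (subseq_uniq aX (fset_uniq X)) a_S mono_a) => chain.
  by exists a.
by exists (rev a); split; rewrite ?size_rev // => z; rewrite mem_rev => /a_X.
Qed.

Lemma down_proper x s y A B : monotone_chain (x :: rcons s y) ->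
  A `<=` [fset z in x :: s] -> x \in B -> y \in B -> B `<=` S -> down A `<` down B.
Proof.
move=> [u aS up mono] /fsubsetP Axs xB yB BS.
have Aa z : z \in A -> z \in x :: rcons s y.
  by move=> /Axs; rewrite in_fset -rcons_cons mem_rcons => zxs; rewrite in_cons zxs orbT.
have AS : A `<=` S by apply/fsubsetP => z /Aa/aS.
rewrite fproperE down_subset; last first.
  by apply/fsubsetP => z /Aa; apply: monotone_sub_down.
apply/fsubsetPn; exists y; first by apply: (fsubsetP (sub_down BS)).
apply: (notin_down (i := i0)) => //; first by apply: aS; rewrite -rcons_cons mem_rcons mem_head.
  by apply: contraTN u => /Axs; rewrite in_fset -rcons_cons rcons_uniq => ->.
move=> z /Axs; rewrite in_fset; move: up; rewrite -rcons_cons pairwise_rcons.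
by case/andP => /allP + _; apply.
Qed.

Variable t : nat.

Definition hulls : seq {fset T} :=
  [seq down A | A <- enum_fset (fpowerset S) & #|` A| == t].

Lemma hullsP Y : Y \in hulls -> exists2 A, (A `<=` S) && (#|` A| == t) & Y = down A.
Proof.
by case/mapP => A; rewrite mem_filter fpowersetE => /andP[tA AS] ->; exists A; rewrite ?AS.
Qed.

Lemma down_in_hulls A : A `<=` S -> #|` A| = t -> down A \in hulls.
Proof.
by move=> AS tA; apply: map_f; rewrite mem_filter tA eqxx /= fpowersetE.
Qed.

Lemma ends_hull x p b y : (size p).+2 = t ->
  monotone_chain (x :: p ++ rcons b y) -> down [fset z in x :: rcons p y] \in hulls.
Proof.
move=> tp /(subseq_monotone_chain (subseq_ends x p b y)) [u aS _ _].
apply: down_in_hulls; last by rewrite card_fseq undup_id // /= size_rcons tp.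
by apply/fsubsetP => z; rewrite in_fset; apply: aS.
Qed.

Lemma height_chain x p b y : (size p).+2 = t ->
  monotone_chain (x :: p ++ rcons b y) ->
  ((size b).+1 <= height hulls (down [fset z in x :: rcons p y]))%N.
Proof.
move=> tp; elim/last_ind: b y => [|b y' IH] y chain; first exact: height_gt0.
have chain_y : monotone_chain (x :: rcons (p ++ rcons b y') y) by rewrite rcons_cat.
have chain_y' : monotone_chain (x :: p ++ rcons b y').
  by apply: subseq_monotone_chain chain_y; rewrite -rcons_cons subseq_rcons.
rewrite size_rcons; apply: leq_ltn_trans (IH _ chain_y') (height_lt _ _).
  exact: ends_hull chain_y'.
have [_ aS _ _] := chain.
apply: down_proper chain_y _ _ _ _; rewrite ?in_fset ?mem_head //=.
- apply/fsubsetP => z; rewrite !in_fset /= !in_cons mem_rcons in_cons mem_cat mem_rcons in_cons.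
  by case/predU1P => [->|/orP[->|->]]; rewrite ?eqxx ?orbT.
- by rewrite in_cons mem_rcons mem_head orbT.
- apply/fsubsetP => z; rewrite in_fset => /(mem_subseq (subseq_ends x p (rcons b y') y)).
  exact: aS.
Qed.

Variable k : nat.
Hypotheses (t_gt1 : (1 < t)%N) (k_gt0 : (0 < k)%N).

Lemma tall_hull a : monotone_chain a -> (t + k <= size a)%N ->
  exists2 A : {fset T}, {subset A <= a} &
    (down A \in hulls) && (k <= height hulls (down A))%N.
Proof.
move=> chain long; have [|x [p [b [y [def_a sp sa]]]]] := @split_ends _ t.-2 a; first lia.
have tp : (size p).+2 = t by lia.
rewrite def_a in chain; exists [fset z in x :: rcons p y].
  by move=> z; rewrite in_fset def_a => /(mem_subseq (subseq_ends x p b y)).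
rewrite (ends_hull tp chain) /=; apply: leq_trans (height_chain tp chain); lia.
Qed.

Definition color (A : {fset T}) : 'I_k :=
  Ordinal (ltn_pmod (height hulls (down A)).-1 k_gt0).

Lemma down_closed_all_colors X : X `<=` S -> down X `<=` X ->
  (monotone_bound #|I| (t + k) <= #|` X|)%N ->
  forall c : 'I_k, exists2 A, (A `<=` X) && (#|` A| == t) & color A = c.
Proof.
move=> XS X_closed large c.
have [a [chain long aX]] := monotone_chain_in XS large.
have [A0 A0a /andP[A0_hull tall]] := tall_hull chain long.
have A0X : down A0 `<=` X.
  apply: fsubset_trans X_closed; apply: down_subset.
  by apply/fsubsetP => z /A0a/aX; apply: (fsubsetP (sub_down XS)).
have c_range : (0 < c.+1 <= height hulls (down A0))%N.
  by rewrite ltn0Sn (leq_trans (ltn_ord c) tall).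
have [Z Z_hull /andP[ZA0 /eqP hZ]] := height_descent A0_hull c_range.
have [A /andP[AS tA] defZ] := hullsP Z_hull.
exists A; first by rewrite tA andbT (fsubset_trans (sub_down AS)) // -defZ (fsubset_trans ZA0).
by apply: val_inj; rewrite /color -defZ hZ /= modn_small.
Qed.

End DownClosure.

Section Halfspaces.
Local Open Scope ring_scope.
Variables (R : realType) (d : nat).

Lemma dotpBr (a x v : 'rV[R]_d) : dotp a (x - v) = dotp a x - dotp a v.
Proof. by rewrite /dotp -sumrB; apply: eq_bigr => j _; rewrite !mxE mulrBr. Qed.

Lemma in_translate_le (H : halfspace R d) v x z : in_translate H v x ->
  dotp (hs_normal H) z <= dotp (hs_normal H) x -> in_translate H v z.
Proof.
rewrite /in_translate /in_halfspace !dotpBr => + zx.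
have zx_v := lerD2r (- dotp (hs_normal H) v) (dotp (hs_normal H) z) (dotp (hs_normal H) x).
by rewrite -zx_v in zx; case: hs_open; [apply: le_lt_trans zx | apply: le_trans zx].
Qed.

End Halfspaces.

Section HalfspaceOrders.
Local Open Scope ring_scope.
Variables (R : realType) (d h : nat) (Hs : 'I_h -> halfspace R d) (S : {fset 'rV[R]_d}).

(* Breaking ties by position in S makes each [hs_le i] antisymmetric on S. *)
Definition hs_key (i : 'I_h) (x : 'rV[R]_d) : R *l nat :=
  (dotp (hs_normal (Hs i)) x, index x S).

Definition hs_le (i : 'I_h) : rel 'rV[R]_d := fun x y => (hs_key i x <= hs_key i y)%O.

Lemma hs_le_total i : total (hs_le i).
Proof. by move=> x y; apply: le_total. Qed.

Lemma hs_le_trans i : transitive (hs_le i).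
Proof. by move=> y x z; apply: le_trans. Qed.

Lemma hs_le_anti i : {in S &, antisymmetric (hs_le i)}.
Proof. by move=> x y xS yS /le_anti [_]; apply: index_inj. Qed.

Lemma hs_le_dotp i x y :
  hs_le i x y -> dotp (hs_normal (Hs i)) x <= dotp (hs_normal (Hs i)) y.
Proof. by rewrite /hs_le lexi_pair => /andP[]. Qed.

Lemma region_down_closed r :
  down hs_le S [fset x in S | in_region Hs r x] `<=` [fset x in S | in_region Hs r x].
Proof.
apply/fsubsetP => z /downP[zS below]; rewrite inE; apply/andP; split=> //.
apply/allP => -[i v] iv.
have [x] := below i; rewrite inE => /andP[_ /allP/(_ _ iv) xv] zx.
exact: in_translate_le xv (hs_le_dotp zx).
Qed.

End HalfspaceOrders.

Theorem theorem4 :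
  forall t k h : nat, (2 <= t)%N -> (1 <= k)%N -> (1 <= h)%N ->
  exists m : nat,
    forall (R : realType) (d : nat) (Hs : 'I_h -> halfspace R d) (S : {fset 'rV[R]_d}),
    exists col : {fset 'rV[R]_d} -> 'I_k,
      forall r : seq ('I_h * 'rV[R]_d),
        (m <= #|` [fset x in S | in_region Hs r x]|)%N ->
        forall c : 'I_k,
          exists T : {fset 'rV[R]_d},
            [/\ is_tuple_of t S T, {in T, forall x, in_region Hs r x} & col T = c].
Proof.
move=> t k h t_gt1 k_gt0 h_gt0; exists (monotone_bound h (t + k)) => R d Hs S.
exists (color (hs_le Hs S) S t k_gt0) => r large c.
set X := [fset x in S | in_region Hs r x] in large *.
have XS : X `<=` S by apply/fsubsetP => x; rewrite inE => /andP[].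
have [|A /andP[AX tA] <-] := down_closed_all_colors (hs_le_total Hs S) (@hs_le_trans _ _ _ Hs S)
  (@hs_le_anti _ _ _ Hs S) (Ordinal h_gt0) t_gt1 k_gt0 XS (region_down_closed Hs S r) _ c.
  by rewrite card_ord.
exists A; split=> //; first by rewrite /is_tuple_of tA (fsubset_trans AX XS).
by move=> x /(fsubsetP AX); rewrite inE => /andP[].
Qed.
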